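(* An equation t₁ ≈ (t₂→1)→1 holds in all strong quasi-Wajsberg* algebras iff it holds in all Wajsberg* algebras.
   Context: Here t₁, t₂ are terms in the language ⟨→, ¬, 1⟩. A quasi-Wajsberg* algebra is an algebra ⟨W; →, ¬, ⁺, ⁻, 1⟩ of type ⟨2,1,1,1,0⟩ satisfying: x→y = ¬y→¬x; (x→1)→((y→1)→z) = (y→1)→((x→1)→z); (1→x)→1 = 1; (z→z)→(x→y) = x→y; (1→1)→x⁺ = ((1→1)→x)⁺ = (x→1)→1 and (1→1)→x⁻ = ((1→1)→x)⁻ = (x→¬1)→¬1; x→y = (y⁺→x⁻)→(x⁺→y⁻); ¬(x→y) = y→x; ¬¬x = x; (x→(¬x→y))⁺ = x⁺→(¬x⁺→y⁺); x∨y = y∨x; x∨(y∨z) = (x∨y)∨z; x→(y∨z) = (x→y)∨(x→z); where x∨y = ((x⁺→y⁺)⁺→(¬x)⁻)→((y⁻→x⁻)⁻→x⁻). A strong quasi-Wajsberg* algebra is a quasi-Wajsberg* algebra satisfying x⁺ = (1→1)→x⁺ and x⁻ = (1→1)→x⁻. A Wajsberg* algebra is an algebra ⟨M; →, ¬, 1⟩ satisfying the analogous axioms with (y→y)→x = x, where x⁺ = (x→1)→1, x⁻ = (x→¬1)→¬1; every Wajsberg* algebra is a strong quasi-Wajsberg* algebra. A term is regular if it contains → or 1; otherwise it has the form ¬ⁿp for a variable p. For regular terms t₁, t₂, the equation t₁ ≈ t₂ holds in all strong quasi-Wajsberg* algebras iff it holds in all Wajsberg* algebras. *)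

Inductive term : Type :=
  | Var : nat -> term
  | Imp : term -> term -> term
  | Neg : term -> term
  | One : term.

Section Laws.
Variables (T : Type) (imp : T -> T -> T) (neg : T -> T)
          (plus minus : T -> T) (one : T).

Definition join (x y : T) : T :=
  imp (imp (plus (imp (plus x) (plus y))) (minus (neg x)))
      (imp (minus (imp (minus y) (minus x))) (minus x)).

Definition qw_axioms : Prop :=
  (forall x y, imp x y = imp (neg y) (neg x)) /\
  (forall x y z, imp (imp x one) (imp (imp y one) z)
                 = imp (imp y one) (imp (imp x one) z)) /\
  (forall x, imp (imp one x) one = one) /\
  (forall x y z, imp (imp z z) (imp x y) = imp x y) /\
  (forall x, imp (imp one one) (plus x) = plus (imp (imp one one) x) /\
             plus (imp (imp one one) x) = imp (imp x one) one) /\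
  (forall x, imp (imp one one) (minus x) = minus (imp (imp one one) x) /\
             minus (imp (imp one one) x) = imp (imp x (neg one)) (neg one)) /\
  (forall x y, imp x y = imp (imp (plus y) (minus x)) (imp (plus x) (minus y))) /\
  (forall x y, neg (imp x y) = imp y x) /\
  (forall x, neg (neg x) = x) /\
  (forall x y, plus (imp x (imp (neg x) y))
               = imp (plus x) (imp (neg (plus x)) (plus y))) /\
  (forall x y, join x y = join y x) /\
  (forall x y z, join x (join y z) = join (join x y) z) /\
  (forall x y z, imp x (join y z) = join (imp x y) (imp x z)).

Definition sqw_axioms : Prop :=
  qw_axioms /\
  (forall x, plus x = imp (imp one one) (plus x)) /\
  (forall x, minus x = imp (imp one one) (minus x)).
End Laws.

Record SQWAlg : Type := {
  sq_car :> Type;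
  sq_imp : sq_car -> sq_car -> sq_car;
  sq_neg : sq_car -> sq_car;
  sq_plus : sq_car -> sq_car;
  sq_minus : sq_car -> sq_car;
  sq_one : sq_car;
  sq_ax : sqw_axioms sq_car sq_imp sq_neg sq_plus sq_minus sq_one }.

Definition w_plus {T} (imp : T -> T -> T) (one : T) (x : T) : T :=
  imp (imp x one) one.
Definition w_minus {T} (imp : T -> T -> T) (neg : T -> T) (one : T) (x : T) : T :=
  imp (imp x (neg one)) (neg one).

Definition w_axioms (T : Type) (imp : T -> T -> T) (neg : T -> T) (one : T) : Prop :=
  qw_axioms T imp neg (w_plus imp one) (w_minus imp neg one) one /\
  (forall x y, imp (imp y y) x = x).

Record WAlg : Type := {
  w_car :> Type;
  w_imp : w_car -> w_car -> w_car;
  w_neg : w_car -> w_car;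
  w_one : w_car;
  w_ax : w_axioms w_car w_imp w_neg w_one }.

Fixpoint eval {T : Type} (imp : T -> T -> T) (neg : T -> T) (one : T)
    (v : nat -> T) (t : term) : T :=
  match t with
  | Var n => v n
  | Imp a b => imp (eval imp neg one v a) (eval imp neg one v b)
  | Neg a => neg (eval imp neg one v a)
  | One => one
  end.

Definition holds_SQW (t1 t2 : term) : Prop :=
  forall (A : SQWAlg) (v : nat -> A),
    eval (sq_imp A) (sq_neg A) (sq_one A) v t1
    = eval (sq_imp A) (sq_neg A) (sq_one A) v t2.

Definition holds_W (t1 t2 : term) : Prop :=
  forall (M : WAlg) (v : nat -> M),
    eval (w_imp M) (w_neg M) (w_one M) v t1
    = eval (w_imp M) (w_neg M) (w_one M) v t2.

(* Every Wajsberg* algebra is a strong quasi-Wajsberg* algebra, which gives one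
   direction.  Conversely, in a strong quasi-Wajsberg* algebra A the map
   x |-> (1->1)->x is a (->, ¬, 1)-homomorphism onto its set of fixed points,
   this set is a Wajsberg* algebra, and the map fixes the value of every regular
   term; hence a regular identity valid in all Wajsberg* algebras holds in A.
   Both sides are regular unless t1 = ¬ⁿp, and such an identity
   ¬ⁿp ≈ (t2->1)->1 already fails in the Wajsberg* algebra {-1,0,1}² at
   p = (1,-1): no element x⁺ = (x->1)->1 there has a coordinate -1, while
   ¬ⁿ(1,-1) always has one. *)

From Stdlib Require Import ProofIrrelevance FunctionalExtensionality.

Fixpoint regular (t : term) : Prop :=
  match t with
  | Var _ => False
  | Neg a => regular a
  | Imp _ _ | One => True
  end.

Lemma regular_or_iter_Neg_Var (t : term) :
  regular t \/ exists n p, t = Nat.iter n Neg (Var p).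
Proof.
  induction t as [p | a _ b _ | a IHa |]; simpl; auto.
  - right; exists 0, p; reflexivity.
  - destruct IHa as [Ha | (n & p & ->)]; [now left |].
    right; exists (S n), p; reflexivity.
Qed.

Lemma eval_iter_Neg_Var {T : Type} (imp : T -> T -> T) (neg : T -> T) (one : T)
    (v : nat -> T) (n p : nat) :
  eval imp neg one v (Nat.iter n Neg (Var p)) = Nat.iter n neg (v p).
Proof. induction n as [| n IHn]; simpl; congruence. Qed.

Lemma w_sqw_axioms (M : WAlg) :
  sqw_axioms M (w_imp M) (w_neg M) (w_plus (w_imp M) (w_one M))
    (w_minus (w_imp M) (w_neg M) (w_one M)) (w_one M).
Proof.
  destruct (w_ax M) as [Hqw Hunit].
  split; [exact Hqw | split; intro x; symmetry; apply Hunit].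
Qed.

Definition sqw_of_w (M : WAlg) : SQWAlg :=
  {| sq_car := M; sq_imp := w_imp M; sq_neg := w_neg M;
     sq_plus := w_plus (w_imp M) (w_one M);
     sq_minus := w_minus (w_imp M) (w_neg M) (w_one M);
     sq_one := w_one M; sq_ax := w_sqw_axioms M |}.

Lemma holds_W_of_holds_SQW (t1 t2 : term) : holds_SQW t1 t2 -> holds_W t1 t2.
Proof. intros H M. exact (H (sqw_of_w M)). Qed.

Section RegularPart.

Variable A : SQWAlg.

Local Notation imp := (sq_imp A).
Local Notation neg := (sq_neg A).
Local Notation one := (sq_one A).
Local Notation plus := (sq_plus A).
Local Notation minus := (sq_minus A).
Local Notation e := (imp one one).
Local Notation evalA := (eval imp neg one).

Definition regularize (x : A) : A := imp e x.

Lemma plus_regularize (x : A) : plus (regularize x) = plus x.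
Proof.
  destruct (sq_ax A) as [(_ & _ & _ & _ & Hplus & _) [Hstrong _]].
  unfold regularize; rewrite (Hstrong x); symmetry; apply Hplus.
Qed.

Lemma minus_regularize (x : A) : minus (regularize x) = minus x.
Proof.
  destruct (sq_ax A) as [(_ & _ & _ & _ & _ & Hminus & _) [_ Hstrong]].
  unfold regularize; rewrite (Hstrong x); symmetry; apply Hminus.
Qed.

Lemma sq_plusE : plus = w_plus imp one.
Proof.
  apply functional_extensionality; intro x.
  destruct (sq_ax A) as [(_ & _ & _ & _ & Hplus & _) _].
  rewrite <- plus_regularize; apply Hplus.
Qed.

Lemma sq_minusE : minus = w_minus imp neg one.
Proof.
  apply functional_extensionality; intro x.
  destruct (sq_ax A) as [(_ & _ & _ & _ & _ & Hminus & _) _].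
  rewrite <- minus_regularize; apply Hminus.
Qed.

Lemma sq_qw_axioms : qw_axioms A imp neg (w_plus imp one) (w_minus imp neg one) one.
Proof. rewrite <- sq_plusE, <- sq_minusE; apply (sq_ax A). Qed.

Lemma regularize_imp (x y : A) : regularize (imp x y) = imp x y.
Proof. destruct (sq_ax A) as [(_ & _ & _ & Hcl & _) _]; apply Hcl. Qed.

Lemma regularize_one : regularize one = one.
Proof. destruct (sq_ax A) as [(_ & _ & Hone & _) _]; apply Hone. Qed.

Lemma regularize_neg (x : A) : regularize (neg x) = neg (regularize x).
Proof.
  destruct (sq_ax A) as [(Hcontra & _ & _ & _ & _ & _ & _ & Hneg_imp & _) _].
  unfold regularize; rewrite Hneg_imp, (Hcontra x), Hneg_imp; reflexivity.
Qed.

(* Axiom x->y = (y⁺->x⁻)->(x⁺->y⁻) reads x->y off the parts x±, y±, which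
   [regularize] does not change. *)
Lemma imp_regularize (x y : A) : imp (regularize x) (regularize y) = imp x y.
Proof.
  destruct (sq_ax A) as [(_ & _ & _ & _ & _ & _ & Hpm & _) _].
  rewrite (Hpm x y), Hpm, !plus_regularize, !minus_regularize; reflexivity.
Qed.

Lemma eval_regularize (v : nat -> A) (t : term) :
  regularize (evalA v t) = evalA (fun n => regularize (v n)) t.
Proof.
  induction t as [p | a IHa b IHb | a IHa |]; simpl.
  - reflexivity.
  - rewrite regularize_imp, <- IHa, <- IHb, imp_regularize; reflexivity.
  - rewrite regularize_neg, IHa; reflexivity.
  - apply regularize_one.
Qed.

Lemma regularize_eval_regular (v : nat -> A) (t : term) :
  regular t -> regularize (evalA v t) = evalA v t.
Proof.
  induction t as [p | a _ b _ | a IHa |]; simpl; intro Ht.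
  - contradiction.
  - apply regularize_imp.
  - rewrite regularize_neg, IHa; auto.
  - apply regularize_one.
Qed.

Definition fixed : Type := { x : A | regularize x = x }.

Definition fixed_imp (x y : fixed) : fixed :=
  exist _ (imp (proj1_sig x) (proj1_sig y)) (regularize_imp _ _).

Definition fixed_neg (x : fixed) : fixed :=
  exist _ (neg (proj1_sig x))
    (eq_trans (regularize_neg _) (f_equal neg (proj2_sig x))).

Definition fixed_one : fixed := exist _ one regularize_one.

Definition fixed_of (x : A) : fixed := exist _ (regularize x) (regularize_imp _ _).

Lemma fixed_eq (x y : fixed) : proj1_sig x = proj1_sig y -> x = y.
Proof. destruct x, y; simpl; apply subset_eq_compat. Qed.

Lemma fixed_w_axioms : w_axioms fixed fixed_imp fixed_neg fixed_one.
Proof.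
  pose proof sq_qw_axioms as Hqw; decompose [and] Hqw.
  split.
  - repeat split; intros; apply fixed_eq; simpl;
      match goal with H : _ |- _ => apply H end.
  - intros [x Hx] y; apply fixed_eq; simpl.
    rewrite <- Hx; match goal with H : _ |- _ => apply H end.
Qed.

Definition regular_part : WAlg :=
  {| w_car := fixed; w_imp := fixed_imp; w_neg := fixed_neg; w_one := fixed_one;
     w_ax := fixed_w_axioms |}.

Lemma eval_fixed (w : nat -> fixed) (t : term) :
  proj1_sig (eval fixed_imp fixed_neg fixed_one w t)
  = evalA (fun n => proj1_sig (w n)) t.
Proof.
  induction t as [p | a IHa b IHb | a IHa |]; simpl; congruence.
Qed.

Lemma eval_regular_part (v : nat -> A) (t : term) :
  regular t ->
  evalA v t = proj1_sig (eval fixed_imp fixed_neg fixed_one (fun n => fixed_of (v n)) t).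
Proof.
  intro Ht.
  rewrite eval_fixed, <- (regularize_eval_regular v t Ht); apply eval_regularize.
Qed.

End RegularPart.

Lemma holds_SQW_of_holds_W_regular (t1 t2 : term) :
  regular t1 -> regular t2 -> holds_W t1 t2 -> holds_SQW t1 t2.
Proof.
  intros H1 H2 H A v.
  rewrite (eval_regular_part A v t1 H1), (eval_regular_part A v t2 H2).
  f_equal; apply (H (regular_part A)).
Qed.

Section Product.

Variables M N : WAlg.

Definition prod_imp (x y : M * N) : M * N :=
  (w_imp M (fst x) (fst y), w_imp N (snd x) (snd y)).
Definition prod_neg (x : M * N) : M * N := (w_neg M (fst x), w_neg N (snd x)).
Definition prod_one : M * N := (w_one M, w_one N).

Lemma prod_w_axioms : w_axioms (M * N) prod_imp prod_neg prod_one.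
Proof.
  pose proof (w_ax M) as HM; pose proof (w_ax N) as HN.
  decompose [and] HM; decompose [and] HN.
  repeat split; intros;
    repeat match goal with p : (_ * _)%type |- _ => destruct p end;
    try split; cbv [prod_imp prod_neg prod_one w_plus w_minus join fst snd]; f_equal;
    match goal with H : _ |- _ => apply H end.
Qed.

Definition prod_WAlg : WAlg :=
  {| w_car := M * N; w_imp := prod_imp; w_neg := prod_neg; w_one := prod_one;
     w_ax := prod_w_axioms |}.

End Product.

Inductive three : Type := Mone | Zero | Pone.

(* The Wajsberg* algebra {-1,0,1}: [x -> y] is [y - x] truncated to [-1, 1]. *)
Definition imp3 (x y : three) : three :=
  match x, y with
  | Mone, Mone => Zero
  | Mone, _ => Pone
  | Zero, y => y
  | Pone, Pone => Zero
  | Pone, _ => Mone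
  end.

Definition neg3 (x : three) : three :=
  match x with Mone => Pone | Zero => Zero | Pone => Mone end.

Lemma three_w_axioms : w_axioms three imp3 neg3 Pone.
Proof.
  repeat split;
    first [ intros [] [] []; reflexivity
          | intros [] []; reflexivity
          | intros []; reflexivity ].
Qed.

Definition W3 : WAlg :=
  {| w_car := three; w_imp := imp3; w_neg := neg3; w_one := Pone;
     w_ax := three_w_axioms |}.

Lemma iter_Neg_Var_plus_not_holds_W (n p : nat) (t : term) :
  ~ holds_W (Nat.iter n Neg (Var p)) (Imp (Imp t One) One).
Proof.
  assert (Hiter : @Nat.iter n (three * three) (prod_neg W3 W3) (Pone, Mone) = (Pone, Mone)
               \/ @Nat.iter n (three * three) (prod_neg W3 W3) (Pone, Mone) = (Mone, Pone)).
  { induction n as [| n IHn]; simpl; [now left |].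
    destruct IHn as [-> | ->]; [right | left]; reflexivity. }
  intro H.
  specialize (H (prod_WAlg W3 W3) (fun _ => (Pone, Mone))); simpl in H.
  rewrite eval_iter_Neg_Var in H.
  destruct (eval _ _ _ _ t) as [[] []];
    destruct Hiter as [Hi | Hi]; rewrite Hi in H; discriminate H.
Qed.

Theorem corollary3p3 (t1 t2 : term) :
  holds_SQW t1 (Imp (Imp t2 One) One) <-> holds_W t1 (Imp (Imp t2 One) One).
Proof.
  split; [apply holds_W_of_holds_SQW |].
  intro H.
  destruct (regular_or_iter_Neg_Var t1) as [Ht1 | (n & p & ->)].
  - apply holds_SQW_of_holds_W_regular; simpl; auto.
  - exfalso; exact (iter_Neg_Var_plus_not_holds_W n p t2 H).
Qed.
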